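(* Let $u$ be a coherent utility on $L^0$ with determining set $\mathcal{D}$, $\rho=-u$, and let $Y^1,\dots,Y^M$ be independent random variables (or random vectors); write $Y=(Y^1,\dots,Y^M)$. Let $X=\sum_{m=1}^MX^m$, where each $X^m$ is $\sigma(Y^m)$-measurable, $X^m\in L^1_s(\mathcal{D})\cap L^1_s(\mathsf{E}(\mathcal{D}\mid Y))\cap L^1$, and $\mathsf{E}X^m=0$. Then $$\rho^f(X;Y^1,\dots,Y^M)\le\sum_{m=1}^M\rho^f(X;Y^m).$$
   Context: Let $(\Omega,\mathcal{F},\mathsf{P})$ be a probability space, $L^0$ the space of all real random variables, $L^1=L^1(\mathsf{P})$, and $\mathcal{P}$ the set of probability measures on $\mathcal{F}$ absolutely continuous with respect to $\mathsf{P}$; measures $\mathsf{Q}\in\mathcal{P}$ are identified with their densities. For $\mathsf{Q}\in\mathcal{P}$ and $X\in L^0$, $\mathsf{E}_\mathsf{Q}X:=\mathsf{E}_\mathsf{Q}X^+-\mathsf{E}_\mathsf{Q}X^-$ with the convention $\infty-\infty=-\infty$; $\mathsf{E}$ is expectation under $\mathsf{P}$. A coherent utility on $L^0$ is a map $u:L^0\to[-\infty,\infty]$ of the form $u(X)=\inf_{\mathsf{Q}\in\mathcal{D}}\mathsf{E}_\mathsf{Q}X$ for a nonempty $\mathcal{D}\subseteq\mathcal{P}$; its determining set is the largest such set, $\{\mathsf{Q}\in\mathcal{P}:\mathsf{E}_\mathsf{Q}X\ge u(X)\ \forall X\in L^0\}$. For $\mathcal{C}\subseteq\mathcal{P}$,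 $L^1_s(\mathcal{C})=\{X\in L^0:\lim_{n\to\infty}\sup_{\mathsf{Q}\in\mathcal{C}}\mathsf{E}_\mathsf{Q}|X|I(|X|>n)=0\}$. For a random vector $V$, $\mathsf{E}(\mathcal{D}\mid V):=\{\mathsf{E}(Z\mid V):Z\in\mathcal{D}\}$, the factor utility is $u^f(X;V):=\inf_{\mathsf{Q}\in\mathsf{E}(\mathcal{D}\mid V)}\mathsf{E}_\mathsf{Q}X$, and the factor risk is $\rho^f(X;V):=-u^f(X;V)$; $\rho^f(X;Y^1,\dots,Y^M)$ means $\rho^f(X;(Y^1,\dots,Y^M))$. *)

From HB Require Import structures.
From mathcomp Require Import all_boot all_order all_algebra.
From mathcomp Require Import all_classical all_reals all_analysis.
Set Implicit Arguments. Unset Strict Implicit. Unset Printing Implicit Defensive.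
Import Order.TTheory GRing.Theory Num.Theory.
Import numFieldNormedType.Exports.
Local Open Scope classical_set_scope.
Local Open Scope ring_scope.
Local Open Scope ereal_scope.

Section Defs.
Context {d : measure_display} {Omega : measurableType d} {R : realType}.
Variable P : probability Omega R.

Definition L0 (X : Omega -> R) : Prop := measurable_fun setT X.

(* Elements of \mathcal P, identified with their densities dQ/dP. *)
Definition density (Z : Omega -> R) : Prop :=
  [/\ measurable_fun setT Z, (forall w, (0 <= Z w)%R)
    & \int[P]_w (Z w)%:E = 1].

(* E_Q X := E_Q X^+ - E_Q X^-, with the convention oo - oo = -oo
   (explicit below). *)
Definition EQ (Z X : Omega -> R) : \bar R :=
  let a := \int[P]_w (Z w * Num.max (X w) 0%R)%:E in
  let b := \int[P]_w (Z w * Num.max (- X w) 0%R)%:E in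
  if (a == +oo) && (b == +oo) then -oo else a - b.

Definition coherent_utility (u : (Omega -> R) -> \bar R) : Prop :=
  exists D0 : set (Omega -> R), [/\ D0 !=set0, D0 `<=` density &
    forall X, L0 X -> u X = ereal_inf [set EQ Z X | Z in D0]].

Definition determining_set (u : (Omega -> R) -> \bar R) : set (Omega -> R) :=
  [set Z | density Z /\ forall X, L0 X -> u X <= EQ Z X].

Definition L1s (C : set (Omega -> R)) (X : Omega -> R) : Prop :=
  L0 X /\
  (fun n : nat => ereal_sup
     [set \int[P]_w (Z w * `|X w| * (\1_[set w' | (n%:R < `|X w'|)%R] w))%:E
       | Z in C]) @ \oo --> (0 : \bar R).

Definition sigma_of {dT} {T : measurableType dT} (V : Omega -> T)
  : set (set Omega) := preimage_set_system setT V measurable.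

Definition sigma_joint {M : nat} {dT : 'I_M -> measure_display}
  {T : forall m, measurableType (dT m)} (Y : forall m, Omega -> T m)
  : set (set Omega) :=
  <<s setT, \bigcup_(m in [set: 'I_M]) sigma_of (Y m) >>.

Definition measurable_wrt (G : set (set Omega)) (W : Omega -> R) : Prop :=
  forall B : set R, measurable B -> G (W @^-1` B).

Definition cond_exp_version (G : set (set Omega)) (Z W : Omega -> R) : Prop :=
  [/\ measurable_wrt G W, P.-integrable setT (EFin \o W) &
    forall A, G A -> \int[P]_(w in A) (W w)%:E = \int[P]_(w in A) (Z w)%:E].

Definition cond_set (D : set (Omega -> R)) (G : set (set Omega))
  : set (Omega -> R) :=
  [set W | density W /\ exists2 Z, D Z & cond_exp_version G Z W].

Definition u_f (D : set (Omega -> R)) (X : Omega -> R) (G : set (set Omega))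
  : \bar R := ereal_inf [set EQ W X | W in cond_set D G].
Definition rho_f D X G : \bar R := - u_f D X G.

Definition independent {M : nat} {dT : 'I_M -> measure_display}
  {T : forall m, measurableType (dT m)} (Y : forall m, Omega -> T m) : Prop :=
  forall B : forall m, set (T m), (forall m, measurable (B m)) ->
    P (\bigcap_(m in [set: 'I_M]) (Y m @^-1` B m)) =
    \prod_(m < M) P (Y m @^-1` B m).

End Defs.

(* Fix [Z] in the determining set and let [W], [W_m] be versions of
   [E(Z | Y)] and [E(Z | Y^m)]. Each [X^k] is [Y]-measurable, so
   [E_W X = sum_k E[Z X^k]]. Under [W_m], the summands [k <> m] factor by
   independence into [E[W_m] E[X^k] = 0], and the [m]-th one is again
   [E[Z X^m]]: thus [E_{W_m} X = E[Z X^m]]. Since [u^f(X; Y^m) <= E_{W_m} X],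
   summing over [m] bounds [sum_m u^f(X; Y^m)] by [E_W X], and taking the
   infimum over [W] gives the claim. *)
From HB Require Import structures.
From mathcomp Require Import all_boot all_order all_algebra.
From mathcomp Require Import all_classical all_reals all_analysis.
From mathcomp Require Import measurable_realfun.
Import Order.TTheory GRing.Theory Num.Theory.
Local Open Scope classical_set_scope.
Local Open Scope ring_scope.
Local Open Scope ereal_scope.

Section density_measure.
Context d (T : measurableType d) (R : realType) (mu : {measure set T -> \bar R}).
Variables (f : T -> R) (mf : measurable_fun setT f)
  (f0 : forall x, (0 <= f x)%R).

(* The proof arguments are only there so that the measure instance below is
   found by inference. *)
Definition density_measure (_ : measurable_fun setT f)
    (_ : forall x, (0 <= f x)%R) (A : set T) : \bar R :=
  \int[mu]_(x in A) (f x)%:E.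
Local Notation fmu := (density_measure mf f0).

Let density_measure0 : fmu set0 = 0.
Proof. by rewrite /density_measure integral_set0. Qed.

Let density_measure_ge0 A : 0 <= fmu A.
Proof. by apply: integral_ge0 => x _; rewrite lee_fin. Qed.

Let density_measure_sigma_additive : semi_sigma_additive fmu.
Proof.
apply: semi_sigma_additive_nng_induced; first exact/measurable_EFinP.
by move=> x; rewrite lee_fin.
Qed.

HB.instance Definition _ := isMeasure.Build _ _ _ fmu
  density_measure0 density_measure_ge0 density_measure_sigma_additive.

Import HBNNSimple.

Lemma integral_density_measure_nnsfun (h : {nnsfun T >-> R}) E :
    measurable E ->
  \int[fmu]_(x in E) (h x)%:E = \int[mu]_(x in E) ((f x)%:E * (h x)%:E).
Proof.
move=> mE.
have mindic r : measurable_fun E (fun x => (r * \1_(h @^-1` [set r]) x)%:E).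
  by apply: (measurable_comp measurableT) => //; exact: measurable_funM.
rewrite [LHS](eq_integral (fun x => \sum_(y \in range h)
    (y * \1_(h @^-1` [set y]) x)%:E)); last first.
  by move=> x _; rewrite fimfunE -fsumEFin.
rewrite [RHS](eq_integral (fun x => \sum_(y \in range h)
    (f x)%:E * (y * \1_(h @^-1` [set y]) x)%:E)); last first.
  move=> x _; rewrite fimfunE -fsumEFin// ge0_mule_fsumr// => y.
  exact: nnfun_muleindic_ge0.
rewrite ge0_integral_fsum//; last by move=> m y Ey; exact: nnfun_muleindic_ge0.
rewrite ge0_integral_fsum//; last 2 first.
- move=> y; apply: emeasurable_funM => //.
  exact/measurable_funTS/measurable_EFinP.
- by move=> y x _; rewrite mule_ge0 ?nnfun_muleindic_ge0 ?lee_fin.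
apply: eq_fsbigr => r /[!inE] -[t _ <-].
have mhr : measurable (h @^-1` [set h t]).
  by rewrite -[X in measurable X]setTI; exact: measurable_funP.
rewrite integralZl_indic_nnsfun// integral_indic//.
under [RHS]eq_integral do rewrite EFinM muleCA.
rewrite ge0_integralZl ?lee_fin//; last 2 first.
- apply: emeasurable_funM; first exact/measurable_funTS/measurable_EFinP.
  exact/measurable_EFinP/measurable_funTS/measurable_indic.
- by move=> x _; rewrite mule_ge0 ?lee_fin.
by congr (_ * _); rewrite /= /density_measure integral_mkcondl epatch_indic.
Qed.

Lemma integral_density_measure (h : T -> \bar R) E : (forall x, 0 <= h x) ->
    measurable E -> measurable_fun E h ->
  \int[fmu]_(x in E) h x = \int[mu]_(x in E) ((f x)%:E * h x).
Proof.
move=> h0 mE mh; pose hn := nnsfun_approx mE mh.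
have hnh x : E x -> (EFin \o hn ^~ x) @ \oo --> h x.
  by move=> Ex; exact: cvg_nnsfun_approx.
have nd_hn x : {homo (fun n => (hn n x)%:E) : a b / (a <= b)%N >-> a <= b}.
  by move=> a b ab; rewrite lee_fin; exact/lefP/nd_nnsfun_approx.
have mhn n : measurable_fun E (EFin \o hn n).
  exact/measurable_EFinP/measurable_funTS.
have mf' : measurable_fun E (EFin \o f).
  exact/measurable_funTS/measurable_EFinP.
transitivity (limn (fun n => \int[fmu]_(x in E) (hn n x)%:E)).
  rewrite -monotone_convergence//; last by move=> n x _; rewrite lee_fin.
  by apply: eq_integral => x /[!inE] Ex; apply/esym/cvg_lim => //; exact: hnh.
transitivity (limn (fun n => \int[mu]_(x in E) ((f x)%:E * (hn n x)%:E))).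
  by congr (limn _); apply/funext => n; exact: integral_density_measure_nnsfun.
rewrite -monotone_convergence//.
- apply: eq_integral => x /[!inE] Ex; apply/cvg_lim => //.
  by apply: cvgeZl => //; exact: hnh.
- by move=> n; apply: emeasurable_funM; [exact: mf'|exact: mhn].
- by move=> n x _; rewrite mule_ge0 ?lee_fin.
- by move=> x _ a b ab; rewrite lee_wpmul2l ?lee_fin//; exact: nd_hn.
Qed.

End density_measure.
Arguments density_measure {d T R} mu {f}.

Section weighted_integral.
Context d (T : measurableType d) (R : realType) (mu : {measure set T -> \bar R}).
Variables (V h : T -> R).
Hypothesis V0 : forall x, (0 <= V x)%R.

Let weighted_funepos :
  (fun x => (V x * h x)%:E)^\+ = (fun x => (V x * Num.max (h x) 0)%:E).
Proof.
by apply/funext => x; rewrite funeposE -EFin_max maxr_pMr// mulr0.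
Qed.

Let weighted_funeneg :
  (fun x => (V x * h x)%:E)^\- = (fun x => (V x * Num.max (- h x) 0)%:E).
Proof.
by apply/funext => x; rewrite funenegE -EFin_max maxr_pMr// mulr0 mulrN.
Qed.

Lemma integral_weighted : \int[mu]_x (V x * h x)%:E =
  \int[mu]_x (V x * Num.max (h x) 0)%:E -
  \int[mu]_x (V x * Num.max (- h x) 0)%:E.
Proof. by rewrite integralE weighted_funepos weighted_funeneg. Qed.

Hypotheses (mV : measurable_fun setT V) (mh : measurable_fun setT h)
  (Vh_fin : \int[mu]_x (V x * `|h x|)%:E < +oo).

Lemma integrable_weighted : mu.-integrable setT (fun x => (V x * h x)%:E).
Proof.
apply/integrableP; split; first exact/measurable_EFinP/measurable_funM.
by under eq_integral do rewrite /= normrM (ger0_norm (V0 _)).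
Qed.

Lemma weighted_funepos_fin_num :
  \int[mu]_x (V x * Num.max (h x) 0)%:E \is a fin_num.
Proof.
rewrite -weighted_funepos; apply: integrable_fin_num => //.
exact/integrable_funepos/integrable_weighted.
Qed.

End weighted_integral.
Arguments integrable_weighted {d T R mu V h}.
Arguments weighted_funepos_fin_num {d T R mu V h}.
Arguments integral_weighted {d T R mu V h}.

Section sub_sigma_algebra.
Context d (T : measurableType d) (R : realType) (G : set (set T)).
Hypotheses (sG : sigma_algebra setT G) (GM : G `<=` measurable).

Lemma measurable_wrtW {h : T -> R} :
  measurable_wrt G h -> measurable_fun setT h.
Proof. by move=> hG _ B mB; rewrite setTI; apply: GM; exact: hG. Qed.

Lemma measurable_wrt_comp {phi : R -> R} {h : T -> R} :
  measurable_fun setT phi -> measurable_wrt G h -> measurable_wrt G (phi \o h).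
Proof.
move=> mphi hG B mB; rewrite comp_preimage; apply: hG.
by rewrite -[X in measurable X]setTI; exact: mphi.
Qed.

Lemma measurable_wrt_normr {h : T -> R} :
  measurable_wrt G h -> measurable_wrt G (fun x => `|h x|)%R.
Proof.
move=> hG; apply: (@measurable_wrt_comp (@Num.norm R R) h _ hG).
exact: normr_measurable.
Qed.

Lemma measurable_wrt_maxr0 {h : T -> R} :
  measurable_wrt G h -> measurable_wrt G (fun x => Num.max (h x) 0)%R.
Proof.
move=> hG; apply: (@measurable_wrt_comp (fun r => Num.max r 0)%R h _ hG).
exact: measurable_maxr.
Qed.

Lemma measurable_wrt_maxNr0 {h : T -> R} :
  measurable_wrt G h -> measurable_wrt G (fun x => Num.max (- h x) 0)%R.
Proof.
move=> hG; apply: (@measurable_wrt_comp (fun r => Num.max (- r) 0)%R h _ hG).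
exact: measurable_maxr.
Qed.

Local Notation TG := (g_sigma_algebraType G).

Let measurable_TG (A : set TG) : measurable A -> G A.
Proof. by move=> mA; rewrite -(sigma_algebra_id sG); exact: mA. Qed.

Let measurable_to_TG : measurable_fun setT (id : T -> TG).
Proof. by move=> _ A /measurable_TG GA; rewrite setTI; exact: GM. Qed.

Variables (mu : {measure set T -> \bar R}) (V1 V2 : T -> R).
Hypotheses (mV1 : measurable_fun setT V1) (mV2 : measurable_fun setT V2)
  (V1_ge0 : forall x, (0 <= V1 x)%R) (V2_ge0 : forall x, (0 <= V2 x)%R)
  (V12 : forall A, G A ->
     \int[mu]_(x in A) (V1 x)%:E = \int[mu]_(x in A) (V2 x)%:E).

(* Both sides are integrals of [h] against the traces on [G] of the measures
   with densities [V1] and [V2], and these traces coincide. *)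
Lemma ge0_integral_mul_version (h : T -> R) :
    measurable_wrt G h -> (forall x, (0 <= h x)%R) ->
  \int[mu]_x (V1 x * h x)%:E = \int[mu]_x (V2 x * h x)%:E.
Proof.
move=> hG h0.
have mhG : measurable_fun (setT : set TG) (EFin \o h).
  apply/measurable_EFinP => _ B mB; rewrite setTI.
  by apply: sub_gen_smallest; exact: hG.
have density_push (k : T -> R) (mk : measurable_fun setT k)
    (k0 : forall x, (0 <= k x)%R) :
    \int[mu]_x (k x * h x)%:E =
    \int[pushforward (density_measure mu mk k0) (id : T -> TG)]_y (h y)%:E.
  rewrite [RHS]ge0_integral_pushforward//; last by move=> y _; rewrite lee_fin.
  rewrite preimage_setT integral_density_measure//.
  exact/measurable_EFinP/measurable_wrtW.
rewrite (density_push V1 mV1 V1_ge0) (density_push V2 mV2 V2_ge0).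
by apply: eq_measure_integral => A /measurable_TG GA _; exact: V12.
Qed.

Lemma integral_mul_abs_version (h : T -> R) : measurable_wrt G h ->
  \int[mu]_x (V1 x * `|h x|)%:E = \int[mu]_x (V2 x * `|h x|)%:E.
Proof.
move=> hG; apply: ge0_integral_mul_version; first exact: measurable_wrt_normr.
by move=> x; exact: normr_ge0.
Qed.

Lemma integral_mul_version (h : T -> R) : measurable_wrt G h ->
  \int[mu]_x (V1 x * h x)%:E = \int[mu]_x (V2 x * h x)%:E.
Proof.
move=> hG; rewrite (integral_weighted V1_ge0) (integral_weighted V2_ge0).
congr (_ - _); apply: ge0_integral_mul_version.
- exact: measurable_wrt_maxr0.
- by move=> x; rewrite le_max lexx orbT.
- exact: measurable_wrt_maxNr0.
- by move=> x; rewrite le_max lexx orbT.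
Qed.

End sub_sigma_algebra.
Arguments measurable_wrtW {d T R G} GM {h}.
Arguments measurable_wrt_normr {d T R G h}.
Arguments measurable_wrt_maxr0 {d T R G h}.
Arguments measurable_wrt_maxNr0 {d T R G h}.
Arguments ge0_integral_mul_version {d T R G} sG GM {mu V1 V2}
  mV1 mV2 V1_ge0 V2_ge0 V12 {h}.
Arguments integral_mul_abs_version {d T R G} sG GM {mu V1 V2}
  mV1 mV2 V1_ge0 V2_ge0 V12 {h}.
Arguments integral_mul_version {d T R G} sG GM {mu V1 V2}
  mV1 mV2 V1_ge0 V2_ge0 V12 {h}.

Section density_expectation.
Context d (Om : measurableType d) (R : realType) (P : probability Om R).

Lemma EQ_integral (V h : Om -> R) : measurable_fun setT V ->
    measurable_fun setT h -> (forall x, (0 <= V x)%R) ->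
    \int[P]_x (V x * `|h x|)%:E < +oo ->
  EQ P V h = \int[P]_x (V x * h x)%:E.
Proof.
move=> mV mh V0 Vh_fin; rewrite [RHS](integral_weighted V0) /EQ /=.
case: ifP => // /andP[/eqP pos_oo _].
by have := weighted_funepos_fin_num V0 mV mh Vh_fin; rewrite pos_oo.
Qed.

Lemma EQ_sum (M : nat) (V : Om -> R) (X : 'I_M -> Om -> R) :
    measurable_fun setT V -> (forall k, measurable_fun setT (X k)) ->
    (forall x, (0 <= V x)%R) ->
    (forall k, \int[P]_x (V x * `|X k x|)%:E < +oo) ->
  EQ P V (fun x => \sum_(k < M) X k x)%R =
  \sum_(k < M) \int[P]_x (V x * X k x)%:E.
Proof.
move=> mV mX V0 VX_fin.
have VX_sum x : (V x * \sum_(k < M) X k x)%:E = \sum_(k < M) (V x * X k x)%:E.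
  by rewrite mulr_sumr sumEFin.
have VX_int : P.-integrable setT (fun x => (V x * \sum_(k < M) X k x)%:E).
  under eq_fun do rewrite VX_sum.
  by apply: integrable_sum => // k _; exact: integrable_weighted.
rewrite EQ_integral//; last 2 first.
- exact: measurable_sum.
- move/integrableP : VX_int => [_].
  by under eq_integral do rewrite /= normrM (ger0_norm (V0 _)).
under eq_integral do rewrite VX_sum.
by rewrite integral_sum// => k; exact: integrable_weighted.
Qed.

Lemma L1s_integral_mul_abs_lty (C : set (Om -> R)) (X Z : Om -> R) :
  L1s P C X -> C Z -> density P Z -> \int[P]_x (Z x * `|X x|)%:E < +oo.
Proof.
move=> [mX X_ui] CZ [mZ Z0 Z1].
have [N _ /(_ N (leqnn N)) /= tail_sup_lt1] :=
  X_ui _ (open_ereal_lt' (ltr01 : (0 : \bar R) < 1)).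
set S := [set x | (N%:R < `|X x|)%R].
have mabsX : measurable_fun setT (fun x => `|X x|)%R.
  by apply: measurableT_comp => //; exact: normr_measurable.
have mS : measurable S.
  have -> : S = (fun x => `|X x|)%R @^-1` `]N%:R, +oo[.
    by apply/seteqP; split => x /=; rewrite in_itv /= andbT.
  rewrite -[X in measurable X]setTI.
  by apply: mabsX => //; exact: measurable_itv.
have mtail : measurable_fun setT (fun x => Z x * `|X x| * \1_S x)%R.
  by apply: measurable_funM; [exact: measurable_funM|exact: measurable_indic].
have tail_lt1 : \int[P]_x (Z x * `|X x| * \1_S x)%:E < 1.
  by apply: le_lt_trans tail_sup_lt1; apply: ereal_sup_ubound; exists Z.
have split_bound x :
    (Z x * `|X x| <= Z x * `|X x| * \1_S x + N%:R * Z x)%R.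
  rewrite indicE; have [xS|xS] := boolP (x \in S).
    by rewrite mulr1 lerDl mulr_ge0.
  rewrite mulr0 add0r mulrC ler_wpM2r//.
  by rewrite leNgt; apply: contra xS => XN; rewrite inE.
apply: (@le_lt_trans _ _ (\int[P]_x
    ((Z x * `|X x| * \1_S x)%:E + (N%:R * Z x)%:E))).
  apply: ge0_le_integral => //.
  - by move=> x _; rewrite lee_fin mulr_ge0.
  - exact/measurable_EFinP/measurable_funM.
  - apply: emeasurable_funD; apply/measurable_EFinP => //.
    exact: measurable_funM.
  - by move=> x _; rewrite -EFinD lee_fin.
rewrite ge0_integralD//; last 4 first.
- by move=> x _; rewrite lee_fin !mulr_ge0.
- exact/measurable_EFinP.
- by move=> x _; rewrite lee_fin mulr_ge0.
- exact/measurable_EFinP/measurable_funM.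
under [X in _ + X]eq_integral do rewrite EFinM.
rewrite ge0_integralZl_EFin//; last 2 first.
- by move=> x _; rewrite lee_fin.
- exact/measurable_EFinP.
rewrite Z1 mule1 lte_add_pinfty ?ltry//.
exact: lt_trans tail_lt1 (ltry _).
Qed.


End density_expectation.
Arguments L1s_integral_mul_abs_lty {d Om R P C X Z}.

Section independent_sigma_algebras.
Context d (Om : measurableType d) (R : realType) (P : probability Om R)
  (G1 G2 : set (set Om)).
Hypotheses (sG1 : sigma_algebra setT G1) (sG2 : sigma_algebra setT G2)
  (G1M : G1 `<=` measurable) (G2M : G2 `<=` measurable)
  (G12 : forall A B, G1 A -> G2 B -> P (A `&` B) = P A * P B).

(* On [G2]-sets, [\1_A] and the constant [P A] have the same integrals. *)
Lemma integral_indic_mul_indep (A : set Om) (h : Om -> R) : G1 A ->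
    measurable_wrt G2 h -> (forall x, (0 <= h x)%R) ->
  \int[P]_x (\1_A x * h x)%:E = P A * \int[P]_x (h x)%:E.
Proof.
move=> G1A hG h0; have mA := G1M _ G1A.
have PA_fin : P A \is a fin_num by exact: fin_num_measure.
rewrite (@ge0_integral_mul_version _ _ _ G2 sG2 G2M P _ (cst (fine (P A))))//.
- under eq_integral do rewrite EFinM.
  rewrite ge0_integralZl_EFin ?fineK ?fine_ge0//.
  + by move=> x _; rewrite lee_fin.
  + exact/measurable_EFinP/(measurable_wrtW G2M hG).
- by move=> x; rewrite /= fine_ge0.
- move=> B G2B; have mB := G2M _ G2B.
  rewrite integral_indic// (integral_cst P mB (fine (P A))%:E) fineK//.
  exact: G12.
Qed.

Lemma integral_mul_indep (f h : Om -> R) :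
    measurable_wrt G1 f -> (forall x, (0 <= f x)%R) ->
    measurable_wrt G2 h -> (forall x, (0 <= h x)%R) ->
    \int[P]_x (h x)%:E \is a fin_num ->
  \int[P]_x (f x * h x)%:E = \int[P]_x (f x)%:E * \int[P]_x (h x)%:E.
Proof.
move=> fG f0 hG h0 h_fin; set c := fine (\int[P]_x (h x)%:E).
have c0 : (0 <= c)%R.
  by rewrite fine_ge0// integral_ge0// => x _; rewrite lee_fin.
under eq_integral do rewrite mulrC.
rewrite (@ge0_integral_mul_version _ _ _ G1 sG1 G1M P _ (cst c))//.
- under eq_integral do rewrite EFinM.
  rewrite ge0_integralZl_EFin//; last 2 first.
  + by move=> x _; rewrite lee_fin.
  + exact/measurable_EFinP/(measurable_wrtW G1M fG).
  by rewrite muleC /c fineK.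
- exact: (measurable_wrtW G2M hG).
- move=> A G1A; have mA := G1M _ G1A.
  rewrite (integral_cst P mA c%:E) integral_mkcond epatch_indic.
  transitivity (\int[P]_x (\1_A x * h x)%:E).
    by apply: eq_integral => x _; rewrite /= EFinM muleC.
  by rewrite integral_indic_mul_indep// /c fineK// muleC.
Qed.

Lemma integral_mul_indep_density (f h : Om -> R) :
    measurable_wrt G1 f -> (forall x, (0 <= f x)%R) ->
    \int[P]_x (f x)%:E = 1 ->
    measurable_wrt G2 h -> P.-integrable setT (EFin \o h) ->
  \int[P]_x (f x * h x)%:E = \int[P]_x (h x)%:E.
Proof.
move=> fG f0 f1 hG hint.
have max0_ge0 (r : R) : (0 <= Num.max r 0)%R by rewrite le_max lexx orbT.
have pos_fin : \int[P]_x (Num.max (h x) 0)%:E \is a fin_num.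
  rewrite (eq_integral (EFin \o h)^\+); last first.
    by move=> x _; rewrite funeposE EFin_max.
  exact/integrable_fin_num/integrable_funepos.
have neg_fin : \int[P]_x (Num.max (- h x) 0)%:E \is a fin_num.
  rewrite (eq_integral (EFin \o h)^\-); last first.
    by move=> x _; rewrite funenegE EFin_max.
  exact/integrable_fin_num/integrable_funeneg.
transitivity (\int[P]_x ((fun=> 1%R) x * h x)%:E); last first.
  by apply: eq_integral => x _; rewrite mul1r.
rewrite (integral_weighted f0) (@integral_weighted _ _ _ _ (fun=> 1%R)) ?ler01//.
congr (_ - _); rewrite integral_mul_indep//.
- by rewrite f1 mul1e; apply: eq_integral => x _; rewrite mul1r.
- exact: measurable_wrt_maxr0.
- by rewrite f1 mul1e; apply: eq_integral => x _; rewrite mul1r.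
- exact: measurable_wrt_maxNr0.
Qed.

End independent_sigma_algebras.
Arguments integral_mul_indep {d Om R P G1 G2} sG1 sG2 G1M G2M G12 {f h}.
Arguments integral_mul_indep_density {d Om R P G1 G2} sG1 sG2 G1M G2M G12 {f h}.

Section sigma_of_lemmas.
Context d (Om : measurableType d) dT (T : measurableType dT) (Y : Om -> T).

Lemma sigma_algebra_sigma_of : sigma_algebra setT (sigma_of Y).
Proof. by apply: sigma_algebra_preimage; exact: sigma_algebra_measurable. Qed.

Lemma sigma_of_measurable : measurable_fun setT Y -> sigma_of Y `<=` measurable.
Proof. by move=> mY _ [B mB <-]; exact: mY. Qed.

Lemma sigma_of_setT : sigma_of Y setT.
Proof. by exists setT => //; rewrite preimage_setT setIT. Qed.

End sigma_of_lemmas.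
Arguments sigma_algebra_sigma_of {d Om dT T}.
Arguments sigma_of_measurable {d Om dT T Y}.
Arguments sigma_of_setT {d Om dT T}.

Section joint_sigma_algebra.
Context d (Om : measurableType d) (M : nat) (dT : 'I_M -> measure_display)
  (T : forall m, measurableType (dT m)) (Y : forall m, Om -> T m).

Lemma sigma_algebra_sigma_joint : sigma_algebra setT (sigma_joint Y).
Proof. exact: smallest_sigma_algebra. Qed.

Lemma sigma_of_sub_joint m : sigma_of (Y m) `<=` sigma_joint Y.
Proof. by move=> A YmA; apply: sub_gen_smallest; exists m. Qed.

Lemma sigma_joint_measurable : (forall m, measurable_fun setT (Y m)) ->
  sigma_joint Y `<=` measurable.
Proof.
move=> mY; apply: smallest_sub; first exact: sigma_algebra_measurable.
by move=> A [m _ YmA]; exact: sigma_of_measurable YmA.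
Qed.

Variables (R : realType) (P : probability Om R).

(* The family that is [B] at index [m] and [setT] elsewhere. *)
Let at_index {m} (B : set (T m)) j : set (T j) :=
  match pselect (m = j) with
  | left e => eq_rect m (fun i => set (T i)) B j e
  | right _ => setT
  end.

Let at_index_id m (B : set (T m)) : at_index B m = B.
Proof.
rewrite /at_index; case: pselect => // e.
by have -> : e = erefl by exact: eq_irrelevance.
Qed.

Let at_index_neq {m} (B : set (T m)) {j} : m <> j -> at_index B j = setT.
Proof. by rewrite /at_index; case: pselect. Qed.

Let measurable_at_index m (B : set (T m)) j :
  measurable B -> measurable (at_index B j).
Proof. by rewrite /at_index; case: pselect => // e; case: _ / e. Qed.

Lemma independent_preimage2 m k (B : set (T m)) (C : set (T k)) :
    independent P Y -> m <> k -> measurable B -> measurable C ->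
  P (Y m @^-1` B `&` Y k @^-1` C) = P (Y m @^-1` B) * P (Y k @^-1` C).
Proof.
move=> indY mk mB mC.
pose F j := at_index B j `&` at_index C j.
have mF j : measurable (F j) by apply: measurableI; exact: measurable_at_index.
have F_neq j : m <> j -> k <> j -> F j = setT.
  by move=> mj kj; rewrite /F (at_index_neq _ mj) (at_index_neq _ kj) setIT.
have Fm : F m = B by rewrite /F at_index_id (at_index_neq _ (nesym mk)) setIT.
have Fk : F k = C by rewrite /F at_index_id (at_index_neq _ mk) setTI.
have := indY F mF.
have -> : \bigcap_(j in [set: 'I_M]) (Y j @^-1` F j) =
    Y m @^-1` B `&` Y k @^-1` C.
  apply/seteqP; split => [x /= YF|x /= [YB YC] j _].
    by split; [rewrite -Fm|rewrite -Fk]; exact: YF.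
  have [<-|mj] := pselect (m = j); first by rewrite Fm.
  have [<-|kj] := pselect (k = j); first by rewrite Fk.
  by rewrite F_neq.
move=> ->; rewrite (bigD1 m)//= (bigD1 k) /=; last by apply/eqP => /esym.
rewrite big1 ?mule1 ?Fm ?Fk// => j /andP[/eqP jm /eqP jk].
by rewrite F_neq ?preimage_setT ?probability_setT//; apply: nesym.
Qed.

Lemma independent_sigma_of m k : independent P Y -> m <> k ->
  forall A B, sigma_of (Y m) A -> sigma_of (Y k) B -> P (A `&` B) = P A * P B.
Proof.
move=> indY mk _ _ [B mB <-] [C mC <-]; rewrite !setTI.
exact: independent_preimage2.
Qed.

End joint_sigma_algebra.
Arguments sigma_algebra_sigma_joint {d Om M dT T}.
Arguments sigma_of_sub_joint {d Om M dT T Y}.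
Arguments sigma_joint_measurable {d Om M dT T Y}.
Arguments independent_sigma_of {d Om M dT T Y R P m k}.

Section finite_pushforward.
Context d d' (T : measurableType d) (T' : measurableType d') (R : realType)
  (mu : {finite_measure set T -> \bar R}) (f : T -> T')
  (mf : measurable_fun setT f).

(* As for [density_measure], the proof argument makes the instances below
   inferable. *)
Definition finite_pushforward (_ : measurable_fun setT f) := pushforward mu f.
Local Notation fmu := (finite_pushforward mf).

Let finite_pushforward0 : fmu set0 = 0.
Proof. by rewrite /finite_pushforward /pushforward preimage_set0 measure0. Qed.

Let finite_pushforward_ge0 A : 0 <= fmu A.
Proof. exact: measure_ge0. Qed.

Let measurable_preimage A : measurable A -> measurable (f @^-1` A).
Proof. by move=> mA; rewrite -[X in measurable X]setTI; exact: mf. Qed.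

Let finite_pushforward_sigma_additive : semi_sigma_additive fmu.
Proof.
move=> F mF tF mUF; rewrite /finite_pushforward /pushforward preimage_bigcup.
apply: measure_semi_sigma_additive.
- by move=> n; exact: measurable_preimage.
- apply/trivIsetP => /= i j _ _ ij; rewrite -preimage_setI.
  by move/trivIsetP : tF => /(_ _ _ _ _ ij) ->//; rewrite preimage_set0.
- by rewrite -preimage_bigcup; exact: measurable_preimage.
Qed.

HB.instance Definition _ := isMeasure.Build _ _ _ fmu
  finite_pushforward0 finite_pushforward_ge0 finite_pushforward_sigma_additive.

Let finite_pushforward_fin : fin_num_fun fmu.
Proof. by move=> A mA; apply: fin_num_measure; exact: measurable_preimage. Qed.

HB.instance Definition _ := Measure_isFinite.Build _ _ _ fmu
  finite_pushforward_fin.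

End finite_pushforward.
Arguments finite_pushforward {d d' T T' R} mu {f}.

Section conditional_expectation.
Context d (Om : measurableType d) (R : realType) (P : probability Om R)
  dT (T : measurableType dT) (Y : Om -> T) (mY : measurable_fun setT Y).

(* Radon-Nikodym on the image space: [E(Z | Y) = g \o Y] with [g] the density
   of the law of [Y] under [Z P] with respect to its law under [P]. *)
Lemma cond_exp_sigma_of (Z : Om -> R) : measurable_fun setT Z ->
    (forall x, (0 <= Z x)%R) -> \int[P]_x (Z x)%:E < +oo ->
  exists W : Om -> R, [/\ measurable_wrt (sigma_of Y) W,
    (forall x, (0 <= W x)%R) &
    forall A, sigma_of Y A ->
      \int[P]_(x in A) (W x)%:E = \int[P]_(x in A) (Z x)%:E].
Proof.
move=> mZ Z0 Z_fin.
have ZP_fin : density_measure P mZ Z0 setT < +oo by [].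
pose law := finite_pushforward P mY.
pose Zlaw := finite_pushforward (mfrestr measurableT ZP_fin) mY.
have Zlaw_law : Zlaw `<< law.
  move=> N lawN B mB BN; have PB0 : P (Y @^-1` B) = 0 by exact: lawN.
  rewrite /Zlaw /finite_pushforward /pushforward /= /mfrestr /mrestr setIT.
  apply: null_set_integral => //.
  - by rewrite -[X in measurable X]setTI; exact: mY.
  - exact/measurable_EFinP/measurable_funTS.
have [g [g0 g_fin g_int gE]] := radon_nikodym_sigma_finite Zlaw_law.
have mg : measurable_fun setT g := measurable_int _ g_int.
exists (fine \o g \o Y); split.
- move=> B mB; exists ((fine \o g) @^-1` B); last by rewrite setTI.
  by rewrite -[X in measurable X]setTI; apply: measurableT_comp.
- by move=> x; rewrite /= fine_ge0.
- move=> _ [B mB <-]; rewrite setTI.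
  have := gE B mB.
  rewrite /Zlaw /finite_pushforward /pushforward /= /mfrestr /mrestr setIT.
  rewrite /density_measure => ->.
  rewrite [RHS](eq_integral (EFin \o (fine \o g))); last first.
    by move=> x _; rewrite /= fineK.
  rewrite [RHS]ge0_integral_pushforward//.
  + exact/measurable_EFinP/measurableT_comp/measurable_funTS.
  + by move=> x _; rewrite lee_fin fine_ge0.
Qed.

End conditional_expectation.
Arguments cond_exp_sigma_of {d Om R} P {dT T Y} mY {Z}.

Lemma cond_exp_density d (Om : measurableType d) (R : realType)
    (P : probability Om R) dT (T : measurableType dT) (Y : Om -> T)
    (Z : Om -> R) :
  measurable_fun setT Y -> density P Z ->
  exists W, density P W /\ cond_exp_version P (sigma_of Y) Z W.
Proof.
move=> mY [mZ Z0 Z1].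
have Z_fin : \int[P]_x (Z x)%:E < +oo by rewrite Z1 ltry.
have [W [WY W0 WZ]] := cond_exp_sigma_of P mY mZ Z0 Z_fin.
have mW := measurable_wrtW (sigma_of_measurable mY) WY.
have W1 : \int[P]_x (W x)%:E = 1.
  by rewrite -Z1; exact: (WZ _ (sigma_of_setT Y)).
exists W; split=> //; split=> //.
apply/integrableP; split; first exact/measurable_EFinP.
by under eq_integral do rewrite /= ger0_norm//; rewrite W1 ltry.
Qed.
Arguments cond_exp_density {d Om R} P {dT T Y Z}.

Section factor_utility.
Context d (Om : measurableType d) (R : realType) (P : probability Om R)
  (M : nat) (dT : 'I_M -> measure_display)
  (T : forall m, measurableType (dT m)) (Y : forall m, Om -> T m)
  (X : 'I_M -> Om -> R) (Z : Om -> R).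
Hypotheses (mY : forall m, measurable_fun setT (Y m))
  (XY : forall m, measurable_wrt (sigma_of (Y m)) (X m))
  (dZ : density P Z) (ZX_fin : forall k, \int[P]_x (Z x * `|X k x|)%:E < +oo).

Let mX k : measurable_fun setT (X k).
Proof. exact: (measurable_wrtW (sigma_of_measurable (mY k)) (XY k)). Qed.

Lemma EQ_cond_exp_sum G W : sigma_algebra setT G -> G `<=` measurable ->
    (forall k, measurable_wrt G (X k)) ->
    density P W -> cond_exp_version P G Z W ->
  EQ P W (fun x => \sum_(k < M) X k x)%R =
  \sum_(k < M) \int[P]_x (Z x * X k x)%:E.
Proof.
move=> sG GM XG [mW W0 _] [_ _ WZ]; have [mZ Z0 _] := dZ.
rewrite EQ_sum//.
- apply: eq_bigr => k _.
  exact: (integral_mul_version sG GM mW mZ W0 Z0 WZ (XG k)).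
- by move=> k; rewrite (integral_mul_abs_version sG GM mW mZ W0 Z0 WZ (XG k)).
Qed.

Hypotheses (indY : independent P Y)
  (X_int : forall k, P.-integrable setT (EFin \o X k))
  (X_mean0 : forall k, \int[P]_x (X k x)%:E = 0).

(* Only the [m]-th summand survives: the others are independent of [W], and
   centered. *)
Lemma EQ_cond_exp_factor m W :
    density P W -> cond_exp_version P (sigma_of (Y m)) Z W ->
  EQ P W (fun x => \sum_(k < M) X k x)%R = \int[P]_x (Z x * X m x)%:E.
Proof.
move=> [mW W0 W1] [WY _ WZ]; have [mZ Z0 _] := dZ.
have sYm k := sigma_algebra_sigma_of (Y k).
have YmM k := sigma_of_measurable (mY k).
have indep k (mk : m <> k) := independent_sigma_of indY mk.
have WX_fin k : \int[P]_x (W x * `|X k x|)%:E < +oo.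
  have [<-|mk] := pselect (m = k).
    by rewrite (integral_mul_abs_version (sYm m) (YmM m) mW mZ W0 Z0 WZ (XY m)).
  have absX_int : \int[P]_x (`|X k x|)%:E < +oo by case/integrableP: (X_int k).
  rewrite (integral_mul_indep (sYm m) (sYm k) (YmM m) (YmM k) (indep k mk))//.
  - by rewrite W1 mul1e.
  - exact: (measurable_wrt_normr (XY k)).
  - by rewrite ge0_fin_numE// integral_ge0// => x _; rewrite lee_fin.
rewrite EQ_sum// (bigD1 m)//= big1 ?adde0.
  exact: (integral_mul_version (sYm m) (YmM m) mW mZ W0 Z0 WZ (XY m)).
move=> k /eqP km; rewrite -(X_mean0 k).
apply: (integral_mul_indep_density (sYm m) (sYm k) (YmM m) (YmM k)) => //.
exact: (indep k (nesym km)).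
Qed.

End factor_utility.
Arguments EQ_cond_exp_sum {d Om R P M dT T Y X Z} mY XY dZ ZX_fin {G W}.
Arguments EQ_cond_exp_factor {d Om R P M dT T Y X Z} mY XY dZ ZX_fin
  indY X_int X_mean0 {m W}.

Theorem proposition3p10 (d : measure_display) (Omega : measurableType d)
  (R : realType) (P : probability Omega R)
  (u : (Omega -> R) -> \bar R) (D : set (Omega -> R))
  (M : nat) (dT : 'I_M -> measure_display)
  (T : forall m, measurableType (dT m)) (Y : forall m, Omega -> T m)
  (Xm : 'I_M -> Omega -> R) :
  coherent_utility P u ->
  D = determining_set P u ->
  (forall m, measurable_fun setT (Y m)) ->
  independent P Y ->
  (forall m, measurable_wrt (sigma_of (Y m)) (Xm m)) ->
  (forall m, L1s P D (Xm m)) ->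
  (forall m, L1s P (cond_set P D (sigma_joint Y)) (Xm m)) ->
  (forall m, P.-integrable setT (EFin \o Xm m)) ->
  (forall m, \int[P]_w (Xm m w)%:E = 0) ->
  let X := fun w => (\sum_(m < M) Xm m w)%R in
  rho_f P D X (sigma_joint Y) <=
    \sum_(m < M) rho_f P D X (sigma_of (Y m)).
Proof.
move=> _ -> mY indY XY XD _ X_int X_mean0; cbv zeta.
set X := (fun w => \sum_(m < M) Xm m w)%R.
rewrite /rho_f /u_f leeNl; apply: le_ereal_inf_tmp.
move=> _ [W [dW [Z DZ WZ]] <-]; have [dZ _] := DZ.
have ZX_fin k := L1s_integral_mul_abs_lty (XD k) DZ dZ.
have XJ k : measurable_wrt (sigma_joint Y) (Xm k).
  by move=> B mB; apply: sigma_of_sub_joint; exact: XY.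
rewrite (EQ_cond_exp_sum mY XY dZ ZX_fin (sigma_algebra_sigma_joint Y)
  (sigma_joint_measurable mY) XJ dW WZ).
have ZX_fin_num m : \int[P]_x (Z x * Xm m x)%:E \is a fin_num.
  have [mZ Z0 _] := dZ.
  apply: integrable_fin_num => //; apply: integrable_weighted => //.
  exact: (measurable_wrtW (sigma_of_measurable (mY m)) (XY m)).
rewrite leeNl -fin_num_sumeN; last by move=> m _; exact: ZX_fin_num.
apply: lee_sum => m _; rewrite leeN2.
have [Wm [dWm WmZ]] := cond_exp_density P (mY m) dZ.
rewrite -(EQ_cond_exp_factor mY XY dZ ZX_fin indY X_int X_mean0 dWm WmZ).
by apply: ereal_inf_lbound; exists Wm => //; split => //; exists Z.
Qed.
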